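(* Let $\Sigma$ be a dec-DNNF circuit whose root is a decision node labelled by the variable $x$, with 0-child $u$ and 1-child $w$. Let $S\subseteq\textit{IP}(\Sigma)$ and define $S_u=\{t\mid t\wedge\overline{x}\in S\}\cup(S\cap\textit{IP}(\Sigma_u))$, $S_w=\{t\mid t\wedge x\in S\}\cup(S\cap\textit{IP}(\Sigma_w))$ and $S'=\{t\mid t\in S,\ x\notin var(t)\}$. Then $S_u\subseteq\textit{IP}(\Sigma_u)$ and $S_w\subseteq\textit{IP}(\Sigma_w)$, and $S=\textit{IP}(\Sigma)$ if and only if $S_u=\textit{IP}(\Sigma_u)$, $S_w=\textit{IP}(\Sigma_w)$, and $S'=\max(\{t_u\wedge t_w\mid t_u\in S_u,\ t_w\in S_w\},\models)$.
   Context: A term is a conjunction of literals (possibly empty); $var(t)$ is the set of variables occurring in $t$. A term $t$ is an implicant of $f$ if $t\models f$, and prime if no term obtained by deleting a literal from $t$ is an implicant. $\textit{IP}(\cdot)$ denotes the set of prime implicants of the function computed by a circuit. A dec-DNNF circuit is a rooted DAG whose leaves are labelled $0$, $1$ or a literal and whose internal nodes are decision nodes (labelled by a variable $x$, with 0-child $u$ and 1-child $w$, computing $(\overline{x}\wedge f_u)\vee(x\wedge f_w)$ where $f_u,f_w$ are the functions computed at the children) or $\wedge$-nodes whose children's subcircuits mention pairwise disjoint sets of variables. $\Sigma_v$ denotes the subcircuit rooted at node $v$. For a set $T$ of terms, $\max(T,\models)$ is the set of terms of $T$ that do not entail another term of $T$. *)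

From HB Require Import structures.
From mathcomp Require Import all_boot finmap.
Set Implicit Arguments. Unset Strict Implicit. Unset Printing Implicit Defensive.
Local Open Scope fset_scope.

(* Variables are natural numbers; a literal is (v, true) for v and
   (v, false) for the negated literal ~v. *)
Definition lit := (nat * bool)%type.
(* A term is a finite set of literals (read as their conjunction);
   a genuine term is additionally consistent (see [consistent]). *)
Definition term := {fset lit}.

Definition consistent (t : term) : Prop :=
  forall v : nat, ~ ((v, true) \in t /\ (v, false) \in t).

Definition var_in (x : nat) (t : term) : Prop := (x, true) \in t \/ (x, false) \in t.

Definition assignment := nat -> bool.

Definition sat_lit (a : assignment) (l : lit) : bool := a l.1 == l.2.
Definition sat_term (a : assignment) (t : term) : Prop := forall l, l \in t -> sat_lit a l.

Definition entails (t t' : term) : Prop := forall a, sat_term a t -> sat_term a t'.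

(* Circuits (tree unfolding of the DAG; sharing is irrelevant to semantics). *)
Inductive circuit : Type :=
| Leaf0 : circuit
| Leaf1 : circuit
| LeafLit : lit -> circuit
| Dec : nat -> circuit -> circuit -> circuit
| AndN : seq circuit -> circuit.

Fixpoint eval (a : assignment) (c : circuit) {struct c} : bool :=
  match c with
  | Leaf0 => false
  | Leaf1 => true
  | LeafLit l => sat_lit a l
  | Dec x u w => if a x then eval a w else eval a u
  | AndN cs => (fix evs (cs : seq circuit) : bool :=
                  match cs with [::] => true | c :: cs' => eval a c && evs cs' end) cs
  end.

Fixpoint vars (c : circuit) {struct c} : seq nat :=
  match c with
  | Leaf0 | Leaf1 => [::]
  | LeafLit l => [:: l.1]
  | Dec x u w => x :: vars u ++ vars w
  | AndN cs => (fix vs (cs : seq circuit) : seq nat :=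
                  match cs with [::] => [::] | c :: cs' => vars c ++ vs cs' end) cs
  end.

(* dec-DNNF: decision nodes (x not mentioned below them, as decision nodes are
   decomposable ands (x /\ f_w) \/ (~x /\ f_u)), and decomposable and-nodes. *)
Inductive decDNNF : circuit -> Prop :=
| dd0 : decDNNF Leaf0
| dd1 : decDNNF Leaf1
| ddLit l : decDNNF (LeafLit l)
| ddDec x u w : x \notin vars u -> x \notin vars w ->
    decDNNF u -> decDNNF w -> decDNNF (Dec x u w)
| ddAnd (cs : seq circuit) :
    (forall i, (i < size cs)%N -> decDNNF (nth Leaf0 cs i)) ->
    (forall i j, (i < size cs)%N -> (j < size cs)%N -> i <> j ->
       forall v, v \in vars (nth Leaf0 cs i) -> v \notin vars (nth Leaf0 cs j)) ->
    decDNNF (AndN cs).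

Definition implicant (t : term) (c : circuit) : Prop :=
  forall a, sat_term a t -> eval a c.

Definition IP (c : circuit) (t : term) : Prop :=
  consistent t /\ implicant t c /\
  forall l, l \in t -> ~ implicant (t `\ l) c.

Definition subset_of (A B : term -> Prop) : Prop := forall t, A t -> B t.
Definition same_set (A B : term -> Prop) : Prop := forall t, A t <-> B t.

Definition maxent (T : term -> Prop) (t : term) : Prop :=
  T t /\ forall t', T t' -> t' <> t -> ~ entails t t'.

(* S_u (b = false, child c = u) and S_w (b = true, child c = w) *)
Definition S_child (x : nat) (b : bool) (c : circuit) (S : term -> Prop) (t : term) : Prop :=
  (~ var_in x t /\ S (t `|` [fset (x, b)])) \/ (S t /\ IP c t).

Definition S_nox (x : nat) (S : term -> Prop) (t : term) : Prop := S t /\ ~ var_in x t.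

(* { t_u /\ t_w | t_u in A, t_w in B }, keeping only genuine (consistent) terms *)
Definition conj_set (A B : term -> Prop) (t : term) : Prop :=
  exists tu tw, A tu /\ B tw /\ t = tu `|` tw /\ consistent t.

From mathcomp Require Import all_boot finmap.
From Stdlib Require Import Classical.
Set Implicit Arguments. Unset Strict Implicit. Unset Printing Implicit Defensive.
Local Open Scope fset_scope.

(* Let f, f_0, f_1 be the functions of the root and of its 0- and 1-child.
   As x does not occur below the root, f_0 and f_1 do not depend on x and
   f = if x then f_1 else f_0, so no prime implicant of f_0 or f_1 mentions x.
   A prime implicant of f containing the literal x^b is x^b /\ t with t a
   prime implicant of f_b; conversely every prime implicant t of f_b gives
   x^b /\ t or t itself as a prime implicant of f.  The prime implicants of f
   without x are the minimal common implicants of f_0 and f_1, i.e. the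
   |=-maximal consistent conjunctions t_0 /\ t_1 of prime implicants of f_0
   and f_1. *)

Lemma fsetU1_inj (K : choiceType) (a : K) (A B : {fset K}) :
  a \notin A -> a \notin B -> A `|` [fset a] = B `|` [fset a] -> A = B.
Proof. by move=> aA aB AB; rewrite -(fsetU1K aA) -(fsetU1K aB) !(fsetUC [fset a]) AB. Qed.

Lemma sat_termU1 a t l : sat_term a (t `|` [fset l]) <-> sat_term a t /\ sat_lit a l.
Proof.
split=> [tl | [ta al] l'].
  by split=> [l' l't|]; apply: tl; rewrite !inE ?l't ?eqxx ?orbT.
by rewrite !inE => /orP[/ta // | /eqP ->].
Qed.

Lemma consistentS t t' : t' `<=` t -> consistent t -> consistent t'.
Proof. by move=> /fsubsetP t't ct v [vt vf]; apply: (ct v); split; apply: t't. Qed.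

Lemma not_var_inE x t : ~ var_in x t <-> forall b, (x, b) \notin t.
Proof.
split=> [nx b | xN]; first by apply/negP => xbt; apply: nx; case: b xbt; [left | right].
by case=> xt; rewrite (negbTE (xN _)) in xt.
Qed.

Lemma not_var_inS x t t' : t' `<=` t -> ~ var_in x t -> ~ var_in x t'.
Proof. by move=> /fsubsetP t't nx [] /t't xt; apply: nx; [left | right]. Qed.

Lemma not_var_inU x t t' : ~ var_in x t -> ~ var_in x t' -> ~ var_in x (t `|` t').
Proof.
rewrite !not_var_inE => xt xt' b.
by rewrite in_fsetU negb_or xt xt'.
Qed.

Lemma var_in_dec x t : (exists b, (x, b) \in t) \/ ~ var_in x t.
Proof.
have [xt | xt] := boolP ((x, true) \in t); first by left; exists true.
have [xf | xf] := boolP ((x, false) \in t); first by left; exists false.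
by right; apply/not_var_inE => -[].
Qed.

Lemma not_var_in_fsetD1 x b t :
  consistent t -> (x, b) \in t -> ~ var_in x (t `\ (x, b)).
Proof.
move=> ct xbt; apply/not_var_inE => c; rewrite in_fsetD1 negb_and negbK.
have [-> | cb] := eqVneq c b; first by rewrite eqxx.
apply/orP; right; apply/negP => xct; apply: (ct x).
by case: b c cb xbt xct => [] [] // _ ? ?; split.
Qed.

Lemma consistentU1 x b t :
  consistent t -> ~ var_in x t -> consistent (t `|` [fset (x, b)]).
Proof.
move=> ct /not_var_inE xN v [].
rewrite !inE => /orP[vt | /eqP[vx tb]] /orP[vf | /eqP[vx' fb]].
- exact: (ct v).
- by move: (xN true); rewrite -vx' vt.
- by move: (xN false); rewrite -vx vf.
- by rewrite -tb in fb.
Qed.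

Lemma entails_fsubset t t' : consistent t -> entails t t' -> t' `<=` t.
Proof.
move=> ct tt'; apply/fsubsetP => -[v c] vct'; apply/negPn/negP => vct.
(* the assignment that follows t and violates the literal (v, c) *)
pose a v' := if v' == v then ~~ c else (v', true) \in t.
have ta : sat_term a t.
  move=> [v' c'] v'c't; rewrite /sat_lit /a /=.
  have [v'v | _] := eqVneq v' v.
    have [c'c | ] := eqVneq c' c; first by rewrite -v'v -c'c v'c't in vct.
    by case: (c); case: (c').
  case: c' v'c't => [-> // | v'f]; rewrite eqbF_neg.
  by apply/negP => v't; apply: (ct v').
by have := tt' a ta _ vct'; rewrite /sat_lit /a /= eqxx; case: (c).
Qed.

Lemma fsubset_entails t t' : t' `<=` t -> entails t t'.
Proof. by move=> /fsubsetP t't a ta l /t't /ta. Qed.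

Lemma same_set_conj A A' B B' :
  same_set A A' -> same_set B B' -> same_set (conj_set A B) (conj_set A' B').
Proof.
move=> AA BB t; split=> -[tu [tw [Atu [Btw tE]]]]; exists tu, tw;
  by split; [apply/AA | split; [apply/BB |]].
Qed.

Lemma conj_set_sub A B tu tw t : A tu -> B tw ->
  tu `|` tw `<=` t -> consistent t -> conj_set A B (tu `|` tw).
Proof. by move=> Atu Btw tuwt ct; exists tu, tw; do 3 split=> //; apply: consistentS ct. Qed.

Lemma same_set_maxent T T' : same_set T T' -> same_set (maxent T) (maxent T').
Proof.
move=> TT t; split=> -[Tt tmax];
  by split=> [|t' /TT]; [apply/TT | apply: tmax].
Qed.

Definition is_implicant (f : assignment -> bool) (t : term) : Prop :=
  forall a, sat_term a t -> f a.

(* [IP c] is [prime_implicant (eval^~ c)] up to conversion. *)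
Definition prime_implicant (f : assignment -> bool) (t : term) : Prop :=
  consistent t /\ is_implicant f t /\ forall l, l \in t -> ~ is_implicant f (t `\ l).

Lemma is_implicantS f t t' : t `<=` t' -> is_implicant f t -> is_implicant f t'.
Proof. by move=> /fsubsetP tt' tf a ta'; apply: tf => l /tt' /ta'. Qed.

Lemma prime_implicantP f t : prime_implicant f t <->
  consistent t /\ is_implicant f t /\
  forall t', t' `<=` t -> is_implicant f t' -> t' = t.
Proof.
split=> -[ct [tf tmin]]; split=> //; split=> //.
  move=> t' t't t'f; apply/eqP; rewrite eqEfsubset t't; apply/fsubsetP => l lt.
  apply/negPn/negP => lt'; apply: (tmin l lt); apply: is_implicantS t'f.
  by apply/fsubsetP => l' l't'; rewrite in_fsetD1 (fsubsetP t't) // andbT;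
    apply: contraNneq lt' => <-.
move=> l lt tlf.
by move: lt; rewrite -(tmin _ (fsubD1set t l) tlf) fsetD11.
Qed.

Lemma exists_prime_implicant f t :
  consistent t -> is_implicant f t -> exists2 p, p `<=` t & prime_implicant f p.
Proof.
elim: {t}_.+1 {-2}t (ltnSn #|`t|) => // n IHn t tn ct tf.
have [[l lt tlf] | tmin] :=
  classic (exists2 l, l \in t & is_implicant f (t `\ l)); last first.
  by exists t => //; split=> //; split=> // l lt tlf; apply: tmin; exists l.
have [|p pt pf] := IHn (t `\ l) _ (consistentS (fsubD1set t l) ct) tlf.
  exact: leq_trans (fproper_ltn_card (fproperD1 lt)) tn.
by exists p => //; apply: fsubset_trans pt (fsubD1set t l).
Qed.

Definition update (a : assignment) (x : nat) (b : bool) : assignment :=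
  fun v => if v == x then b else a v.

Lemma update_at a x b : update a x b x = b.
Proof. by rewrite /update eqxx. Qed.

Definition indep (x : nat) (f : assignment -> bool) : Prop :=
  forall a b, f (update a x b) = f a.

Lemma sat_term_update x b a t :
  ~ var_in x t -> sat_term a t -> sat_term (update a x b) t.
Proof.
move=> /not_var_inE xN ta [v c] vct; rewrite /sat_lit /update /=.
have [vx | _] := eqVneq v x; last exact: ta _ vct.
by move: (xN c); rewrite -vx vct.
Qed.

Lemma sat_update_lit x b a t :
  ~ var_in x t -> sat_term a t -> sat_term (update a x b) (t `|` [fset (x, b)]).
Proof.
move=> nx ta; apply/sat_termU1; split; first exact: sat_term_update.
by rewrite /sat_lit update_at.
Qed.

Lemma prime_implicant_indep x f t : indep x f -> prime_implicant f t -> ~ var_in x t.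
Proof.
move=> fx [ct [tf tmin]]; apply/not_var_inE => b; apply/negP => xbt.
apply: (tmin _ xbt) => a ta; rewrite -(fx a b); apply: tf.
rewrite -(fsetD1K xbt) fsetUC.
exact: sat_update_lit (not_var_in_fsetD1 ct xbt) ta.
Qed.

Section Shannon.

Variables (x : nat) (g : bool -> assignment -> bool) (F : assignment -> bool).
Hypothesis g_indep : forall b, indep x (g b).
Hypothesis F_shannon : forall a, F a = g (a x) a.

Lemma implicant_nox b t : ~ var_in x t ->
  is_implicant F t <-> is_implicant (g b) t /\ is_implicant (g (~~ b)) t.
Proof.
move=> nx; split=> [tF | [tb tnb] a ta].
  suff tg c : is_implicant (g c) t by split; apply: tg.
  move=> a ta; have := tF _ (sat_term_update c nx ta).
  by rewrite F_shannon update_at g_indep.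
rewrite F_shannon; case: (a x); case: b tb tnb => /= tb tnb;
  by [apply: tb | apply: tnb].
Qed.

Lemma implicant_lit b t : ~ var_in x t ->
  is_implicant F (t `|` [fset (x, b)]) <-> is_implicant (g b) t.
Proof.
move=> nx; split=> [tF a ta | tb a /sat_termU1 [ta /eqP /= ab]].
  have := tF _ (sat_update_lit nx ta).
  by rewrite F_shannon update_at g_indep.
by rewrite F_shannon ab; apply: tb.
Qed.

Lemma prime_lit b t : ~ var_in x t ->
  prime_implicant F (t `|` [fset (x, b)]) -> prime_implicant (g b) t.
Proof.
move=> nx /prime_implicantP [ct [tF tmin]]; apply/prime_implicantP.
split; first exact: consistentS (fsubsetUl _ _) ct.
split=> [|t' t't t'b]; first exact/(implicant_lit b nx).
have nx' := not_var_inS t't nx.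
apply: fsetU1_inj (tmin _ (fsetSU _ t't) _).
- exact: (not_var_inE x t').1 nx' b.
- exact: (not_var_inE x t).1 nx b.
- exact/(implicant_lit b nx').
Qed.

Lemma prime_mem_lit b p : prime_implicant F p -> (x, b) \in p ->
  prime_implicant (g b) (p `\ (x, b)).
Proof.
move=> pF xbp; apply: (prime_lit (not_var_in_fsetD1 (proj1 pF) xbp)).
by rewrite fsetUC fsetD1K.
Qed.

Lemma prime_child b t : prime_implicant (g b) t ->
  prime_implicant F (t `|` [fset (x, b)]) \/ prime_implicant F t.
Proof.
move=> tP; have nx := prime_implicant_indep (g_indep b) tP.
move/prime_implicantP: tP => [ct [tb tmin]].
have [tnb | tnb] := classic (is_implicant (g (~~ b)) t).
  right; apply/prime_implicantP; split=> //; split=> [|t' t't t'F].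
    exact/(implicant_nox b nx).
  exact: tmin t't (proj1 (proj1 (implicant_nox b (not_var_inS t't nx)) t'F)).
left; apply/prime_implicantP; split; first exact: consistentU1.
split=> [|t' t't t'F]; first exact/(implicant_lit b nx).
have t'xt : t' `\ (x, b) `<=` t by rewrite fsubDset fsetUC.
have nx' := not_var_inS t'xt nx.
have [xbt' | xbt'] := boolP ((x, b) \in t').
  rewrite -(fsetD1K xbt') fsetUC in t'F *.
  by rewrite (tmin _ t'xt (proj1 (implicant_lit b nx') t'F)).
rewrite mem_fsetD1 // in t'xt nx'; case: tnb; apply: is_implicantS t'xt _.
exact: (proj2 (proj1 (implicant_nox b nx') t'F)).
Qed.

Lemma implicantU_nox tu tw : ~ var_in x (tu `|` tw) ->
  is_implicant (g false) tu -> is_implicant (g true) tw ->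
  is_implicant F (tu `|` tw).
Proof.
move=> nx tu0 tw1; apply/(implicant_nox false nx); split.
  exact: is_implicantS (fsubsetUl _ _) tu0.
exact: is_implicantS (fsubsetUr _ _) tw1.
Qed.

Lemma implicant_nox_conj t : consistent t -> ~ var_in x t -> is_implicant F t ->
  exists tu tw, [/\ prime_implicant (g false) tu, prime_implicant (g true) tw
                  & tu `|` tw `<=` t].
Proof.
move=> ct nx /(implicant_nox false nx) [t0 t1].
have [tu tut tuP] := exists_prime_implicant ct t0.
have [tw twt twP] := exists_prime_implicant ct t1.
by exists tu, tw; split; rewrite // fsubUset tut twt.
Qed.

Lemma conj_prime_implicant t :
  conj_set (prime_implicant (g false)) (prime_implicant (g true)) t ->
  [/\ consistent t, ~ var_in x t & is_implicant F t].
Proof.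
move=> [tu [tw [tuP [twP [-> ct]]]]].
have nx : ~ var_in x (tu `|` tw).
  exact: not_var_inU (prime_implicant_indep (g_indep _) tuP)
                     (prime_implicant_indep (g_indep _) twP).
by split=> //; apply: implicantU_nox nx (proj1 (proj2 tuP)) (proj1 (proj2 twP)).
Qed.

Lemma prime_nox_maxent t : prime_implicant F t /\ ~ var_in x t <->
  maxent (conj_set (prime_implicant (g false)) (prime_implicant (g true))) t.
Proof.
split=> [[/prime_implicantP [ct [tF tmin]] nx] | [tC tmax]].
  have [tu [tw [tuP twP tutw]]] := implicant_nox_conj ct nx tF.
  have tuwC := conj_set_sub tuP twP tutw ct.
  have [_ _ /(tmin _ tutw) tuwE] := conj_prime_implicant tuwC.
  split; first by rewrite -tuwE.
  move=> t' t'C t't /(entails_fsubset ct) t'sub; apply: t't.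
  have [_ _ t'F] := conj_prime_implicant t'C.
  exact: tmin t'sub t'F.
have [ct nx tF] := conj_prime_implicant tC.
split=> //; apply/prime_implicantP; split=> //; split=> // t' t't t'F.
have [tu [tw [tuP twP tutw]]] :=
  implicant_nox_conj (consistentS t't ct) (not_var_inS t't nx) t'F.
have tuwt := fsubset_trans tutw t't.
have [tuwE | /eqP tuwN] := eqVneq (tu `|` tw) t.
  by apply/eqP; rewrite eqEfsubset t't -{1}tuwE.
by case: (tmax _ (conj_set_sub tuP twP tuwt ct) tuwN (fsubset_entails tuwt)).
Qed.

End Shannon.

Lemma eq_eval : forall c a a', {in vars c, a =1 a'} -> eval a c = eval a' c.
Proof.
fix IH 1 => -[| | l | y u w | cs] a a' aa' //=.
- by rewrite /sat_lit aa' // inE.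
- rewrite aa' ?inE ?eqxx // (IH u a a') ?(IH w a a') // => v vc;
    by apply: aa'; rewrite inE mem_cat vc ?orbT.
- elim: cs aa' => //= c cs IHcs aa'.
  by rewrite (IH c a a') ?IHcs // => v vc; apply: aa'; rewrite mem_cat vc ?orbT.
Qed.

Lemma eval_indep x c : x \notin vars c -> indep x (eval^~ c).
Proof.
move=> xc a b; apply: eq_eval => v vc; rewrite /update.
by have [vx | //] := eqVneq v x; rewrite -vx vc in xc.
Qed.

Section DecisionNode.

Variables (x : nat) (u w : circuit).
Hypotheses (xu : x \notin vars u) (xw : x \notin vars w).

Let child (b : bool) : circuit := if b then w else u.

Lemma child_indep b : indep x (eval^~ (child b)).
Proof. by case: b; apply: eval_indep. Qed.

Lemma eval_Dec_shannon a : eval a (Dec x u w) = eval a (child (a x)).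
Proof. by rewrite /=; case: (a x). Qed.

Variable S : term -> Prop.
Hypothesis S_IP : subset_of S (IP (Dec x u w)).

Lemma S_child_sub_IP b : subset_of (S_child x b (child b) S) (IP (child b)).
Proof.
move=> t [[nx /S_IP tP] | [_ //]].
exact: (prime_lit child_indep eval_Dec_shannon nx tP).
Qed.

Lemma S_child_eq_IP b : same_set S (IP (Dec x u w)) ->
  same_set (S_child x b (child b) S) (IP (child b)).
Proof.
move=> SE t; split=> [|tP]; first exact: S_child_sub_IP.
have nx := prime_implicant_indep (child_indep b) tP.
by case: (prime_child child_indep eval_Dec_shannon tP) => /SE; [left | right].
Qed.

Lemma S_nox_eq_maxent : same_set S (IP (Dec x u w)) ->
  same_set (S_nox x S)
           (maxent (conj_set (S_child x false u S) (S_child x true w S))).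
Proof.
move=> SE t.
have SSE := same_set_maxent (same_set_conj (S_child_eq_IP false SE)
                                           (S_child_eq_IP true SE)) t.
split=> [[/SE tP nx] | /SSE].
  by apply/SSE; apply/(prime_nox_maxent child_indep eval_Dec_shannon).
by case/(prime_nox_maxent child_indep eval_Dec_shannon) => /SE.
Qed.

Lemma IP_eq_S :
  same_set (S_child x false u S) (IP u) -> same_set (S_child x true w S) (IP w) ->
  same_set (S_nox x S)
           (maxent (conj_set (S_child x false u S) (S_child x true w S))) ->
  same_set S (IP (Dec x u w)).
Proof.
move=> Su Sw Snox p; split=> [|pP]; first exact: S_IP.
have [[b xbp] | nx] := var_in_dec x p; last first.
  apply: (proj1 ((Snox p).2 _)); apply/(same_set_maxent (same_set_conj Su Sw)).
  exact/(prime_nox_maxent child_indep eval_Dec_shannon).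
have Sb : same_set (S_child x b (child b) S) (IP (child b)) by case: (b).
case/Sb: (prime_mem_lit child_indep eval_Dec_shannon pP xbp) => [[_ Sp] | [Sp _]].
  by rewrite fsetUC fsetD1K in Sp.
(* p `\ (x, b) is not even an implicant, p being prime *)
by case: pP => _ [_ /(_ _ xbp) []]; case: (S_IP Sp) => _ [].
Qed.

End DecisionNode.

Theorem proposition9 (x : nat) (u w : circuit) (S : term -> Prop) :
  decDNNF (Dec x u w) ->
  subset_of S (IP (Dec x u w)) ->
  subset_of (S_child x false u S) (IP u) /\
  subset_of (S_child x true w S) (IP w) /\
  (same_set S (IP (Dec x u w)) <->
     same_set (S_child x false u S) (IP u) /\
     same_set (S_child x true w S) (IP w) /\
     same_set (S_nox x S)
              (maxent (conj_set (S_child x false u S) (S_child x true w S)))).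
Proof.
move=> D SIP; have [xu xw] : x \notin vars u /\ x \notin vars w by inversion D.
split; first exact: (S_child_sub_IP xu xw SIP (b := false)).
split; first exact: (S_child_sub_IP xu xw SIP (b := true)).
split=> [SE | [Su [Sw Snox]]]; last exact: IP_eq_S.
split; first exact: (S_child_eq_IP xu xw SIP false SE).
split; first exact: (S_child_eq_IP xu xw SIP true SE).
exact: S_nox_eq_maxent.
Qed.
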